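(* Let $C=\mathbb{S}^1\times\mathbb{R}$ be the flat Euclidean cylinder, $\theta_0\in\mathbb{S}^1$, $v=\{\theta_0\}\times\mathbb{R}$, and let $f:C\to C$ be a geodesic-preserving bijection with $f(v)=v$, $f(\theta_0,0)=(\theta_0,0)$ and $f(\theta_0,1)=(\theta_0,1)$. Then $f$ maps vertical geodesics to vertical geodesics and slant geodesics to slant geodesics.
   Context: $C$ carries the product of the flat metric on $\mathbb{S}^1=\mathbb{R}/\mathbb{Z}$ and the standard metric on $\mathbb{R}$. A geodesic is the image of a locally isometric immersion of the whole real line; a bijection (not assumed continuous) is geodesic-preserving if it maps every geodesic onto a geodesic as a set. Vertical geodesics are the lines $\{\theta\}\times\mathbb{R}$, horizontal geodesics are the circles $\mathbb{S}^1\times\{r\}$, and slant geodesics are all other geodesics. *)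

From Stdlib Require Import Reals.
Open Scope R_scope.

(* S^1 = R/Z, represented by the canonical representatives in [0,1). *)
Definition S1 : Type := {x : R | 0 <= x < 1}.

Definition Cyl : Type := (S1 * R)%type.

(* Quotient (flat) distance on R/Z between representatives in [0,1). *)
Definition circ_dist (a b : R) : R := Rmin (Rabs (a - b)) (1 - Rabs (a - b)).

Definition cdist (p q : Cyl) : R :=
  sqrt (circ_dist (proj1_sig (fst p)) (proj1_sig (fst q)) ^ 2
        + (snd p - snd q) ^ 2).

Definition local_isometry (g : R -> Cyl) : Prop :=
  forall t : R, exists eps : R, 0 < eps /\
    forall s s' : R, Rabs (s - t) < eps -> Rabs (s' - t) < eps ->
      cdist (g s) (g s') = Rabs (s - s').

Definition geodesic (G : Cyl -> Prop) : Prop :=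
  exists g : R -> Cyl, local_isometry g /\ forall p, G p <-> exists t, g t = p.

Definition vertical (G : Cyl -> Prop) : Prop :=
  exists th : S1, forall p : Cyl, G p <-> fst p = th.

Definition horizontal (G : Cyl -> Prop) : Prop :=
  exists r : R, forall p : Cyl, G p <-> snd p = r.

Definition slant (G : Cyl -> Prop) : Prop :=
  geodesic G /\ ~ vertical G /\ ~ horizontal G.

Definition image (f : Cyl -> Cyl) (G : Cyl -> Prop) : Cyl -> Prop :=
  fun q => exists p, G p /\ f p = q.

Definition bijective_map (f : Cyl -> Cyl) : Prop :=
  (forall x y, f x = f y -> x = y) /\ (forall y, exists x, f x = y).

(* Bijection (not assumed continuous) mapping every geodesic onto a geodesic. *)
Definition geodesic_preserving (f : Cyl -> Cyl) : Prop :=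
  bijective_map f /\ forall G, geodesic G -> geodesic (image f G).

From Stdlib Require Import Reals Lra Lia ClassicalEpsilon ProofIrrelevance.
Open Scope R_scope.

(* Every geodesic of the flat cylinder is the image of a linear motion
   t |-> (theta + a t mod 1, r + b t) with a^2 + b^2 = 1: near each parameter a
   local isometry lifts to an isometric embedding of an interval into the
   Euclidean plane, hence is affine there, and its velocity (a, b) is locally
   constant, hence constant on the connected line.  Consequently a non-vertical
   geodesic meets every vertical line, a slant one meets it at least twice, and a
   horizontal one only once.  As f is injective and fixes v setwise, a vertical
   line other than v is sent to a geodesic avoiding v, hence to a vertical line;
   a slant geodesic G is sent to a geodesic meeting v twice, which is not v
   (that would force G = v) and not horizontal. *)

Ltac lra_cases :=
  unfold circ_dist, Rmin in *;
  repeat match goal with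
  | |- context [Rle_dec ?x ?y] => destruct (Rle_dec x y)
  | H : context [Rle_dec ?x ?y] |- _ => destruct (Rle_dec x y)
  end;
  try split_Rabs; lra.

Definition angle (p : Cyl) : R := proj1_sig (fst p).

Lemma angle_bounds (p : Cyl) : 0 <= angle p < 1.
Proof. exact (proj2_sig (fst p)). Qed.

Lemma S1_eq (u v : S1) : proj1_sig u = proj1_sig v -> u = v.
Proof.
  destruct u as [x Hx], v as [y Hy]; simpl; intros ->.
  f_equal; apply proof_irrelevance.
Qed.

Lemma cyl_eq (p q : Cyl) : angle p = angle q -> snd p = snd q -> p = q.
Proof. intros Ha Hr; apply injective_projections; [apply S1_eq|]; assumption. Qed.

Lemma circ_dist_lift a b : 0 <= a < 1 -> 0 <= b < 1 ->
  exists k : Z, Rabs (a - b - IZR k) = circ_dist a b.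
Proof.
  intros Ha Hb.
  destruct (Rle_dec (Rabs (a - b)) (1/2)).
  - exists 0%Z; lra_cases.
  - destruct (Rle_dec 0 (a - b)); [exists 1%Z | exists (-1)%Z]; lra_cases.
Qed.

Lemma circ_dist_of_lift a b d (k : Z) : 0 <= a < 1 -> 0 <= b < 1 ->
  Rabs d < 1/2 -> a - b = d + IZR k -> circ_dist a b = Rabs d.
Proof.
  intros Ha Hb Hd E.
  assert (Hk1 : (-2 < k)%Z) by (apply lt_IZR; lra_cases).
  assert (Hk2 : (k < 2)%Z) by (apply lt_IZR; lra_cases).
  assert (k = (-1)%Z \/ k = 0%Z \/ k = 1%Z) as [-> | [-> | ->]] by lia; lra_cases.
Qed.

Lemma circ_dist_nonneg a b : 0 <= a < 1 -> 0 <= b < 1 -> 0 <= circ_dist a b.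
Proof. intros; lra_cases. Qed.

Lemma circ_dist_le_cdist p q : circ_dist (angle p) (angle q) <= cdist p q.
Proof.
  pose proof (circ_dist_nonneg _ _ (angle_bounds p) (angle_bounds q)).
  unfold cdist; fold (angle p) (angle q).
  rewrite <- (sqrt_pow2 (circ_dist (angle p) (angle q))) at 1 by assumption.
  apply sqrt_le_1_alt; pose proof (pow2_ge_0 (snd p - snd q)); lra.
Qed.

Lemma cdist_sqr_of_lift p q d (k : Z) : Rabs d < 1/2 ->
  angle p - angle q = d + IZR k -> cdist p q ^ 2 = d ^ 2 + (snd p - snd q) ^ 2.
Proof.
  intros Hd E.
  unfold cdist; fold (angle p) (angle q).
  rewrite pow2_sqrt by (apply Rplus_le_le_0_compat; apply pow2_ge_0).
  rewrite (circ_dist_of_lift _ _ d k (angle_bounds p) (angle_bounds q) Hd E).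
  now rewrite pow2_abs.
Qed.

Lemma eq_scale_of_triangle_eq d w d1 w1 tau h : h <> 0 ->
  d ^ 2 + w ^ 2 = tau ^ 2 -> d1 ^ 2 + w1 ^ 2 = h ^ 2 ->
  (d - d1) ^ 2 + (w - w1) ^ 2 = (tau - h) ^ 2 -> d = d1 / h * tau /\ w = w1 / h * tau.
Proof.
  intros Hh N N1 D.
  assert (Hdot : d * d1 + w * w1 = tau * h) by nra.
  assert (Z : Rsqr (d - d1 / h * tau) + Rsqr (w - w1 / h * tau) = 0).
  { unfold Rsqr.
    replace ((d - d1 / h * tau) * (d - d1 / h * tau) + (w - w1 / h * tau) * (w - w1 / h * tau))
      with ((d ^ 2 + w ^ 2) - 2 * (tau / h) * (d * d1 + w * w1)
            + (tau / h) ^ 2 * (d1 ^ 2 + w1 ^ 2)) by (field; exact Hh).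
    rewrite N, Hdot, N1; field; exact Hh. }
  apply Rplus_sqr_eq_0 in Z; lra.
Qed.

Lemma plane_isometry_linear (x y : R -> R) (t e : R) : 0 < e -> x t = 0 -> y t = 0 ->
  (forall s s', Rabs (s - t) < e -> Rabs (s' - t) < e ->
     (x s - x s') ^ 2 + (y s - y s') ^ 2 = (s - s') ^ 2) ->
  exists a b, a ^ 2 + b ^ 2 = 1 /\
    forall s, Rabs (s - t) < e -> x s = a * (s - t) /\ y s = b * (s - t).
Proof.
  intros He Hx Hy Hiso.
  set (h := e / 2).
  assert (Hh : h <> 0) by (unfold h; lra).
  assert (Ht : Rabs (t - t) < e) by (rewrite Rminus_diag, Rabs_R0; lra).
  assert (Hth : Rabs (t + h - t) < e) by (unfold h; split_Rabs; lra).
  assert (Norm : forall s, Rabs (s - t) < e -> x s ^ 2 + y s ^ 2 = (s - t) ^ 2).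
  { intros s Hs; pose proof (Hiso s t Hs Ht) as E.
    now rewrite Hx, Hy, !Rminus_0_r in E. }
  assert (Nh : x (t + h) ^ 2 + y (t + h) ^ 2 = h ^ 2).
  { rewrite (Norm _ Hth); f_equal; ring. }
  exists (x (t + h) / h), (y (t + h) / h); split.
  - replace ((x (t + h) / h) ^ 2 + (y (t + h) / h) ^ 2)
      with ((x (t + h) ^ 2 + y (t + h) ^ 2) / h ^ 2) by (field; exact Hh).
    rewrite Nh; field; exact Hh.
  - intros s Hs.
    refine (eq_scale_of_triangle_eq _ _ _ _ (s - t) h Hh (Norm s Hs) Nh _).
    rewrite (Hiso s (t + h) Hs Hth); f_equal; ring.
Qed.

Definition linear_near (g : R -> Cyl) (t e a b : R) : Prop :=
  forall s, Rabs (s - t) < e ->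
    snd (g s) = snd (g t) + b * (s - t) /\
    exists n : Z, angle (g s) = angle (g t) + a * (s - t) + IZR n.

Lemma local_isometry_linear_near g t : local_isometry g ->
  exists e a b, 0 < e /\ a ^ 2 + b ^ 2 = 1 /\ linear_near g t e a b.
Proof.
  intros Hg; destruct (Hg t) as [eps [Heps Hiso]].
  destruct (choice (fun s (k : Z) =>
    Rabs (angle (g s) - angle (g t) - IZR k) = circ_dist (angle (g s)) (angle (g t))))
    as [K HK].
  { intro s; apply circ_dist_lift; apply angle_bounds. }
  (* Within radius 1/4 the lifts x s stay within 1/2 of each other, where the
     circle distance is just the distance of lifts. *)
  set (e := Rmin eps (1/4)).
  assert (He : 0 < e) by (apply Rmin_glb_lt; lra).
  assert (He_eps : e <= eps) by apply Rmin_l.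
  assert (He_4 : e <= 1/4) by apply Rmin_r.
  set (x := fun s => angle (g s) - angle (g t) - IZR (K s)).
  set (y := fun s => snd (g s) - snd (g t)).
  assert (Hx_small : forall s, Rabs (s - t) < e -> Rabs (x s) < 1/4).
  { intros s Hs; unfold x; rewrite HK.
    eapply Rle_lt_trans; [apply circ_dist_le_cdist|].
    rewrite (Hiso s t) by (rewrite ?Rminus_diag, ?Rabs_R0; lra); lra. }
  assert (Hxy : forall s s', Rabs (s - t) < e -> Rabs (s' - t) < e ->
                  (x s - x s') ^ 2 + (y s - y s') ^ 2 = (s - s') ^ 2).
  { intros s s' Hs Hs'.
    rewrite <- (pow2_abs (s - s')), <- (Hiso s s') by lra.
    rewrite (cdist_sqr_of_lift _ _ (x s - x s') (K s - K s')).
    - unfold y; f_equal; ring.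
    - pose proof (Hx_small s Hs); pose proof (Hx_small s' Hs'); split_Rabs; lra.
    - unfold x; rewrite minus_IZR; ring. }
  assert (Hxt : x t = 0) by (pose proof (HK t); unfold x; lra_cases).
  assert (Hyt : y t = 0) by (unfold y; ring).
  destruct (plane_isometry_linear x y t e He Hxt Hyt Hxy) as [a [b [Hab Hlin]]].
  exists e, a, b; split; [exact He | split; [exact Hab |]].
  intros s Hs; destruct (Hlin s Hs) as [Ex Ey]; unfold x, y in *.
  split; [lra | exists (K s); lra].
Qed.

Lemma linear_near_velocity_unique g t1 e1 a1 b1 t2 e2 a2 b2 :
  0 < e2 -> a1 ^ 2 + b1 ^ 2 = 1 -> a2 ^ 2 + b2 ^ 2 = 1 ->
  linear_near g t1 e1 a1 b1 -> linear_near g t2 e2 a2 b2 -> Rabs (t2 - t1) < e1 ->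
  a1 = a2 /\ b1 = b2.
Proof.
  intros He2 N1 N2 H1 H2 Ht.
  set (rho := Rmin (Rmin e2 (e1 - Rabs (t2 - t1))) (1/2) / 2).
  assert (Hrho : 0 < rho < e2 /\ rho < e1 - Rabs (t2 - t1) /\ rho <= 1/4).
  { pose proof (Rmin_l (Rmin e2 (e1 - Rabs (t2 - t1))) (1/2)).
    pose proof (Rmin_r (Rmin e2 (e1 - Rabs (t2 - t1))) (1/2)).
    pose proof (Rmin_l e2 (e1 - Rabs (t2 - t1))).
    pose proof (Rmin_r e2 (e1 - Rabs (t2 - t1))).
    assert (0 < Rmin (Rmin e2 (e1 - Rabs (t2 - t1))) (1/2))
      by (repeat apply Rmin_glb_lt; lra).
    unfold rho; lra. }
  assert (Hs1 : Rabs (t2 + rho - t1) < e1) by (split_Rabs; lra).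
  assert (Hs2 : Rabs (t2 + rho - t2) < e2) by (split_Rabs; lra).
  destruct (H1 _ Hs1) as [Y1 [n1 X1]].
  destruct (H1 _ Ht) as [Y1' [n1' X1']].
  destruct (H2 _ Hs2) as [Y2 [n2 X2]].
  replace (t2 + rho - t2) with rho in Y2, X2 by ring.
  assert (Hb : (b1 - b2) * rho = 0) by nra.
  assert (Ha : (a1 - a2) * rho = IZR (n2 + n1' - n1)) by (rewrite minus_IZR, plus_IZR; nra).
  assert (Hn : (n2 + n1' - n1)%Z = 0%Z).
  { apply one_IZR_lt1; rewrite <- Ha.
    assert (-1 <= a1 <= 1) by nra; assert (-1 <= a2 <= 1) by nra; nra. }
  rewrite Hn in Ha.
  split; [apply Rminus_diag_uniq; apply Rmult_integral in Ha
         | apply Rminus_diag_uniq; apply Rmult_integral in Hb];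
  lra.
Qed.

Definition locally_constant {T : Type} (h : R -> T) : Prop :=
  forall t, exists e, 0 < e /\ forall s, Rabs (s - t) < e -> h s = h t.

Lemma locally_constant_comp {T U : Type} (F : T -> U) (h : R -> T) :
  locally_constant h -> locally_constant (fun s => F (h s)).
Proof.
  intros Hh t; destruct (Hh t) as [e [He Hs]].
  exists e; split; [exact He | intros s Hst; now rewrite (Hs s Hst)].
Qed.

Lemma locally_constant_continuity (h : R -> R) : locally_constant h -> continuity h.
Proof.
  intros Hh x eps Heps; destruct (Hh x) as [e [He Hs]].
  exists e; split; [exact He|].
  intros s [_ Hd]; simpl in *; unfold R_dist in *.
  rewrite (Hs s Hd), Rminus_diag, Rabs_R0; exact Heps.
Qed.

(* R is connected: the indicator of the level set of [h s] would otherwise be a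
   continuous function skipping the value 1/2. *)
Lemma locally_constant_eq {T : Type} (h : R -> T) :
  locally_constant h -> forall s t, h s = h t.
Proof.
  intros Hh s t.
  destruct (excluded_middle_informative (h t = h s)) as [E | NE]; [now symmetry|].
  set (k := fun z => (if excluded_middle_informative (h z = h s) then 0 else 1) - 1/2).
  assert (Hc : continuity k)
    by exact (locally_constant_continuity _ (locally_constant_comp
      (fun u => (if excluded_middle_informative (u = h s) then 0 else 1) - 1/2) h Hh)).
  assert (Hks : k s = -1/2)
    by (unfold k; destruct excluded_middle_informative; [lra | tauto]).
  assert (Hkt : k t = 1/2)
    by (unfold k; destruct excluded_middle_informative; [tauto | lra]).
  assert (Hk : forall z, k z <> 0)
    by (intro z; unfold k; destruct excluded_middle_informative; lra).
  exfalso; destruct (Rle_dec s t) as [Hst | Hts].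
  - destruct (IVT_cor k s t Hc Hst ltac:(rewrite Hks, Hkt; lra)) as [z [_ Hz]].
    exact (Hk z Hz).
  - destruct (IVT_cor k t s Hc ltac:(lra) ltac:(rewrite Hks, Hkt; lra)) as [z [_ Hz]].
    exact (Hk z Hz).
Qed.

Definition linear_motion (g : R -> Cyl) (a b : R) : Prop :=
  forall t, snd (g t) = snd (g 0) + b * t /\
    exists n : Z, angle (g t) = angle (g 0) + a * t + IZR n.

Lemma frac_part_shift x (n : Z) : frac_part (x + IZR n) = frac_part x.
Proof.
  destruct (base_fp x) as [H0 H1].
  symmetry; apply (Int_part_frac_part_spec _ (Int_part x + n)); [lra|].
  rewrite plus_IZR; unfold frac_part; ring.
Qed.

Lemma linear_motion_of_linear_near g a b :
  (forall t, exists e, 0 < e /\ linear_near g t e a b) -> linear_motion g a b.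
Proof.
  intros Hloc t.
  assert (Hy : locally_constant (fun s => snd (g s) - b * s)).
  { intro u; destruct (Hloc u) as [e [He Hu]]; exists e; split; [exact He|].
    intros s Hs; destruct (Hu s Hs) as [E _]; rewrite E; ring. }
  assert (Hx : locally_constant (fun s => frac_part (angle (g s) - a * s))).
  { intro u; destruct (Hloc u) as [e [He Hu]]; exists e; split; [exact He|].
    intros s Hs; destruct (Hu s Hs) as [_ [n E]]; rewrite E.
    replace (angle (g u) + a * (s - u) + IZR n - a * s)
      with (angle (g u) - a * u + IZR n) by ring.
    apply frac_part_shift. }
  split.
  - pose proof (locally_constant_eq _ Hy t 0); simpl in *; lra.
  - exists (Int_part (angle (g t) - a * t) - Int_part (angle (g 0) - a * 0)%R)%Z.
    pose proof (locally_constant_eq _ Hx t 0) as E; simpl in E.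
    unfold frac_part in E; rewrite minus_IZR; lra.
Qed.

Lemma local_isometry_linear_motion g : local_isometry g ->
  exists a b, a ^ 2 + b ^ 2 = 1 /\ linear_motion g a b.
Proof.
  intros Hg.
  destruct (choice (fun t (v : R * R) =>
    exists e, 0 < e /\ fst v ^ 2 + snd v ^ 2 = 1 /\ linear_near g t e (fst v) (snd v)))
    as [V HV].
  { intro t; destruct (local_isometry_linear_near g t Hg) as [e [a [b H]]].
    now exists (a, b), e. }
  assert (HVc : locally_constant V).
  { intro t; destruct (HV t) as [e [He [Nt Ht]]]; exists e; split; [exact He|].
    intros s Hs; destruct (HV s) as [e' [He' [Ns Hs']]].
    destruct (linear_near_velocity_unique _ _ _ _ _ _ _ _ _ He' Nt Ns Ht Hs' Hs) as [Ea Eb].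
    now apply injective_projections. }
  destruct (HV 0) as [e0 [_ [Hab _]]].
  exists (fst (V 0)), (snd (V 0)); split; [exact Hab|].
  apply linear_motion_of_linear_near; intro t.
  destruct (HV t) as [e [He [_ Ht]]]; exists e; split; [exact He|].
  now rewrite <- (locally_constant_eq V HVc t 0).
Qed.

Lemma geodesic_linear_motion G : geodesic G ->
  exists g a b, a ^ 2 + b ^ 2 = 1 /\ linear_motion g a b /\
    (forall p, G p <-> exists t, g t = p).
Proof.
  intros [g [Hg HG]]; destruct (local_isometry_linear_motion g Hg) as [a [b [Hab Hm]]].
  now exists g, a, b.
Qed.

Lemma linear_motion_angle g a b c (k : Z) : a <> 0 -> linear_motion g a b ->
  0 <= c < 1 -> angle (g ((c + IZR k - angle (g 0)) / a)) = c.
Proof.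
  intros Ha Hm Hc; set (t := (c + IZR k - angle (g 0)) / a).
  destruct (Hm t) as [_ [n E]].
  replace (a * t) with (c + IZR k - angle (g 0)) in E by (unfold t; field; exact Ha).
  pose proof (angle_bounds (g t)).
  assert (Hkn : (k + n)%Z = 0%Z) by (apply one_IZR_lt1; rewrite plus_IZR; lra).
  apply (f_equal IZR) in Hkn; rewrite plus_IZR in Hkn; lra.
Qed.

Lemma linear_motion_vertical g b G : linear_motion g 0 b -> b <> 0 ->
  (forall p, G p <-> exists t, g t = p) -> vertical G.
Proof.
  intros Hm Hb HG.
  assert (Hfst : forall t, fst (g t) = fst (g 0)).
  { intro t; apply S1_eq; destruct (Hm t) as [_ [n E]].
    pose proof (angle_bounds (g t)); pose proof (angle_bounds (g 0)).
    assert (n = 0%Z) as -> by (apply one_IZR_lt1; lra).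
    unfold angle in E; lra. }
  exists (fst (g 0)); intro p; rewrite HG; split.
  - intros [t <-]; apply Hfst.
  - intro Hp; exists ((snd p - snd (g 0)) / b).
    apply injective_projections; [now rewrite Hfst|].
    destruct (Hm ((snd p - snd (g 0)) / b)) as [E _]; rewrite E; field; exact Hb.
Qed.

Lemma linear_motion_horizontal g a G : linear_motion g a 0 -> a <> 0 ->
  (forall p, G p <-> exists t, g t = p) -> horizontal G.
Proof.
  intros Hm Ha HG; exists (snd (g 0)); intro p; rewrite HG; split.
  - intros [t <-]; destruct (Hm t) as [E _]; rewrite E; ring.
  - intro Hp; exists ((angle p + IZR 0 - angle (g 0)) / a); apply cyl_eq.
    + apply (linear_motion_angle g a 0); [exact Ha | exact Hm | apply angle_bounds].
    + destruct (Hm ((angle p + IZR 0 - angle (g 0)) / a)) as [E _]; rewrite E, Hp; ring.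
Qed.

Lemma geodesic_avoiding_vertical G th : geodesic G ->
  (forall q, G q -> fst q <> th) -> vertical G.
Proof.
  intros HG Hav; destruct (geodesic_linear_motion G HG) as [g [a [b [Hab [Hm Hg]]]]].
  destruct (Req_dec a 0) as [-> | Ha].
  - apply (linear_motion_vertical g b); [exact Hm | intros ->; lra | exact Hg].
  - exfalso; apply (Hav (g ((proj1_sig th + IZR 0 - angle (g 0)) / a))).
    + apply Hg; eexists; reflexivity.
    + apply S1_eq, (linear_motion_angle g a b); [exact Ha | exact Hm | apply proj2_sig].
Qed.

Lemma slant_meets_vertical_twice G th : slant G ->
  exists p1 p2, G p1 /\ G p2 /\ fst p1 = th /\ fst p2 = th /\ p1 <> p2.
Proof.
  intros [HG [NV NH]]; destruct (geodesic_linear_motion G HG) as [g [a [b [Hab [Hm Hg]]]]].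
  destruct (Req_dec a 0) as [-> | Ha].
  { exfalso; apply NV, (linear_motion_vertical g b); [exact Hm | intros ->; lra | exact Hg]. }
  destruct (Req_dec b 0) as [-> | Hb].
  { exfalso; apply NH, (linear_motion_horizontal g a); assumption. }
  set (c := proj1_sig th); pose proof (proj2_sig th) as Hc; fold c in Hc.
  set (t1 := (c + IZR 0 - angle (g 0)) / a); set (t2 := (c + IZR 1 - angle (g 0)) / a).
  exists (g t1), (g t2); repeat split.
  - apply Hg; eexists; reflexivity.
  - apply Hg; eexists; reflexivity.
  - apply S1_eq, (linear_motion_angle g a b); assumption.
  - apply S1_eq, (linear_motion_angle g a b); assumption.
  - intro E; apply (f_equal snd) in E.
    destruct (Hm t1) as [Y1 _]; destruct (Hm t2) as [Y2 _]; rewrite Y1, Y2 in E.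
    assert (Et : t1 = t2) by (apply (Rmult_eq_reg_l b); [lra | exact Hb]).
    unfold t1, t2 in Et; apply (Rmult_eq_reg_r (/ a)) in Et; [lra|].
    now apply Rinv_neq_0_compat.
Qed.

Lemma vertical_geodesic G : vertical G -> geodesic G.
Proof.
  intros [th Hth]; exists (fun t => (th, t)); split.
  - intro t; exists 1; split; [lra|]; intros s s' _ _.
    unfold cdist, circ_dist; simpl; rewrite Rminus_diag, Rabs_R0, Rmin_left by lra.
    rewrite <- sqrt_Rsqr_abs; f_equal; unfold Rsqr; ring.
  - intro p; rewrite Hth; split.
    + intros <-; exists (snd p); now destruct p.
    + now intros [t <-].
Qed.

Section Preserving.

Variables (f : Cyl -> Cyl) (th0 : S1).
Hypothesis f_inj : forall x y, f x = f y -> x = y.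
Hypothesis f_geodesic : forall G, geodesic G -> geodesic (image f G).
Hypothesis f_line : forall q, image f (fun p => fst p = th0) q <-> fst q = th0.

Lemma on_line_image p : fst (f p) = th0 <-> fst p = th0.
Proof.
  split.
  - intro Hp; destruct (proj2 (f_line (f p)) Hp) as [p' [Hp' E]].
    now rewrite <- (f_inj _ _ E).
  - intro Hp; apply f_line; now exists p.
Qed.

Lemma image_vertical G : vertical G -> vertical (image f G).
Proof.
  intros HV; pose proof (f_geodesic G (vertical_geodesic G HV)) as HfG.
  destruct HV as [th Hth].
  destruct (excluded_middle_informative (th = th0)) as [-> | NE].
  - exists th0; intro q; rewrite <- f_line.
    split; intros [p [Hp <-]]; exists p; split; auto; now apply Hth.
  - apply (geodesic_avoiding_vertical _ th0 HfG).
    intros q [p [Hp <-]] Hq; apply Hth in Hp; apply (on_line_image p) in Hq; congruence.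
Qed.

Lemma image_slant G : slant G -> slant (image f G).
Proof.
  intros HS; destruct (slant_meets_vertical_twice G th0 HS)
    as [p1 [p2 [G1 [G2 [L1 [L2 D]]]]]].
  destruct HS as [HG [NV NH]].
  apply (on_line_image p1) in L1; apply (on_line_image p2) in L2.
  split; [now apply f_geodesic | split].
  - intros [th Hth].
    assert (th = th0) as -> by (rewrite <- L1; symmetry; apply Hth; now exists p1).
    apply NV; exists th0; intro p; rewrite <- on_line_image, <- Hth; split.
    + intro Hp; now exists p.
    + intros [p' [Hp' E]]; now rewrite <- (f_inj _ _ E).
  - intros [r Hr].
    assert (R1 : snd (f p1) = r) by (apply Hr; now exists p1).
    assert (R2 : snd (f p2) = r) by (apply Hr; now exists p2).
    apply D, f_inj, injective_projections; congruence.
Qed.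

End Preserving.

Theorem lemma4p3 (f : Cyl -> Cyl) (th0 : S1) :
  geodesic_preserving f ->
  (forall q : Cyl, image f (fun p : Cyl => fst p = th0) q <-> fst q = th0) ->
  f (th0, 0) = (th0, 0) ->
  f (th0, 1) = (th0, 1) ->
  (forall G : Cyl -> Prop, vertical G -> vertical (image f G)) /\
  (forall G : Cyl -> Prop, slant G -> slant (image f G)).
Proof.
  intros [[f_inj _] f_geodesic] f_line _ _.
  split.
  - exact (image_vertical f th0 f_inj f_geodesic f_line).
  - exact (image_slant f th0 f_inj f_geodesic f_line).
Qed.
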